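(* There exists a countable family $\mathcal{F}=\{f_n : n\in\omega\}$ of continuous functions $f_n\colon 2^\omega\to 2^\omega$ such that every maximal square covered by $\mathcal{F}$ is uncountable; that is, whenever $S\subseteq 2^\omega$ is maximal with respect to inclusion among subsets of $2^\omega$ such that $S\times S$ is covered by $\mathcal{F}$, the set $S$ is uncountable.
   Context: $2^\omega$ denotes the Cantor set, i.e. the space of all functions $\omega\to\{0,1\}$ with the product topology. A set $M\subseteq 2^\omega\times 2^\omega$ is said to be covered by a family of functions $\mathcal{F}$ if for every $(x,y)\in M$ there is $f\in\mathcal{F}$ such that either $y=f(x)$ or $x=f(y)$. *)

From HB Require Import structures.
From mathcomp Require Import all_boot all_order all_algebra.
From mathcomp Require Import all_classical all_reals all_analysis.
Set Implicit Arguments. Unset Strict Implicit. Unset Printing Implicit Defensive.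
Local Open Scope classical_set_scope.

Definition covered_by (F : nat -> cantor_space -> cantor_space)
  (M : set (cantor_space * cantor_space)) : Prop :=
  forall p, M p -> exists n, p.2 = F n p.1 \/ p.1 = F n p.2.

Definition maximal_covered_square (F : nat -> cantor_space -> cantor_space)
  (S : set cantor_space) : Prop :=
  covered_by F (S `*` S) /\
  forall T : set cantor_space, S `<=` T -> covered_by F (T `*` T) -> T = S.

From Pilot Require Import Defs.
From HB Require Import structures.
From mathcomp Require Import all_boot all_order all_algebra.
From mathcomp Require Import all_classical all_reals all_analysis.
Local Open Scope classical_set_scope.

(* Take f_0 = id and let f_(k+1) read off the k-th section of x, stored on
   the even coordinates through a pairing of nat * nat with nat.  Given any
   enumeration (t_k) of a countable S, the point x whose k-th section is t_k
   and whose odd coordinates diagonalise against (t_k) lies outside S, yet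
   f_(k+1) x = t_k and f_0 x = x, so (S + {x})^2 is still covered by the
   family and S is not maximal. *)

Lemma prod_topology_continuous {X : topologicalType} {I : Type}
    {K : I -> topologicalType} (f : X -> prod_topology K) :
  (forall i, continuous (fun x => f x i)) -> continuous f.
Proof.
move=> cf x; apply/cvg_sup => i; move: x.
apply/(@continuousP _ (initial_topology (@proj I K i))) => _ [B oB <-].
by apply/continuousP: B oB; exact: cf.
Qed.

Lemma reindex_continuous {I J : eqType} {T : topologicalType} (c : I -> J) :
  continuous (fun x : {ptws J -> T} => (x \o c : {ptws I -> T})).
Proof. by apply: prod_topology_continuous => i; exact: proj_continuous. Qed.

Section maximal_covered_square.
Variables (F : nat -> cantor_space -> cantor_space) (S : set cantor_space).

Lemma covered_by_setU1 (x : cantor_space) : Defs.covered_by F (S `*` S) ->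
  (exists n, F n x = x) -> (forall s, S s -> exists n, F n x = s) ->
  Defs.covered_by F ((S `|` [set x]) `*` (S `|` [set x])).
Proof.
move=> covS [n0 Fx] Freach [a b] [/= [Sa|->] [Sb|->]].
- exact: (covS (a, b)).
- by have [n Fxa] := Freach a Sa; exists n; right.
- by have [n Fxb] := Freach b Sb; exists n; left.
- by exists n0; left.
Qed.

Lemma maximal_covered_square_mem (x : cantor_space) :
  maximal_covered_square F S ->
  (exists n, F n x = x) -> (forall s, S s -> exists n, F n x = s) -> S x.
Proof.
move=> [covS maxS] Fx Freach.
rewrite -(maxS _ (@subsetUl _ S [set x])); last exact: covered_by_setU1.
by right.
Qed.

End maximal_covered_square.

Arguments maximal_covered_square_mem {F S} x.

Definition cantor_section (k : nat) (x : cantor_space) : cantor_space :=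
  fun m => x (pickle (k, m)).*2.

Definition cantor_family (n : nat) : cantor_space -> cantor_space :=
  if n is k.+1 then cantor_section k else id.

Lemma cantor_family_continuous n : continuous (cantor_family n).
Proof.
case: n => [|k] /=; first by move=> x; exact: cvg_id.
exact: (reindex_continuous (fun m => (pickle (k, m)).*2)).
Qed.

Definition diagonal_code (t : nat -> cantor_space) : cantor_space := fun n =>
  if odd n then ~~ t n./2 n
  else if unpickle n./2 is Some (k, m) then t k m else false.

Lemma cantor_section_code t k : cantor_section k (diagonal_code t) = t k.
Proof.
apply: funext => m.
by rewrite /cantor_section /diagonal_code odd_double doubleK pickleK.
Qed.

Lemma diagonal_code_neq t j : diagonal_code t <> t j.
Proof.
move=> /(congr1 (fun x => x j.*2.+1)).
by rewrite /diagonal_code /= odd_double uphalf_double; case: (t j _).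
Qed.

Theorem theorem2p1 :
  exists F : nat -> cantor_space -> cantor_space,
    (forall n, continuous (F n)) /\
    forall S : set cantor_space, maximal_covered_square F S -> ~ countable S.
Proof.
exists cantor_family; split; first exact: cantor_family_continuous.
move=> S maxS /pcard_surjP [t tS].
have : ~ S (diagonal_code t) by move=> /tS [j _ /esym]; exact: diagonal_code_neq.
apply; apply: (maximal_covered_square_mem _ maxS); first by exists 0.
by move=> s /tS [k _ <-]; exists k.+1; exact: cantor_section_code.
Qed.
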